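(* Let $W\colon \mathrm{GL}^+(2)\to\mathbb{R}$ be a rank-one convex isotropic energy function with an additive volumetric-isochoric split, i.e. there are functions $h,f\colon(0,\infty)\to\mathbb{R}$ with $h(t)=h(1/t)$ for all $t>0$ such that \[ W(F)=h\!\left(\frac{\lambda_1}{\lambda_2}\right)+f(\lambda_1\lambda_2)\qquad\text{for all }F\in\mathrm{GL}^+(2), \] where $\lambda_1,\lambda_2>0$ are the singular values of $F$. Then $h$ is convex on $(0,\infty)$ or $f$ is convex on $(0,\infty)$.
   Context: $\mathrm{GL}^+(2)=\{F\in\mathbb{R}^{2\times2}:\det F>0\}$. $W$ is isotropic (and objective) if $W(R_1FR_2)=W(F)$ for all $R_1\in\mathrm{SO}(2)$, $R_2\in\mathrm{O}(2)$. A function $W\colon\mathrm{GL}^+(2)\to\mathbb{R}$ is called rank-one convex if its extension $\widehat W\colon\mathbb{R}^{2\times2}\to\mathbb{R}\cup\{+\infty\}$, $\widehat W=W$ on $\mathrm{GL}^+(2)$ and $\widehat W=+\infty$ otherwise, satisfies $\widehat W(tF_1+(1-t)F_2)\le t\widehat W(F_1)+(1-t)\widehat W(F_2)$ for all $F_1,F_2$ with $\operatorname{rank}(F_1-F_2)=1$ and $t\in(0,1)$. *)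

From HB Require Import structures.
From mathcomp Require Import all_boot all_order all_algebra.
From mathcomp Require Import reals constructive_ereal.
Set Implicit Arguments. Unset Strict Implicit. Unset Printing Implicit Defensive.
Import Order.TTheory GRing.Theory Num.Theory.
Local Open Scope ring_scope.

Section Defs.
Variable R : realType.

Definition orth2 (A : 'M[R]_2) : Prop := A *m A^T = 1%:M.
Definition rot2 (A : 'M[R]_2) : Prop := orth2 A /\ \det A = 1.

Definition diag2 (l1 l2 : R) : 'M[R]_2 :=
  \matrix_(i < 2, j < 2) (if i == j then (if i == 0 :> nat then l1 else l2) else 0).

Definition singular_values (F : 'M[R]_2) (l1 l2 : R) : Prop :=
  0 <= l1 /\ 0 <= l2 /\
  exists U V : 'M[R]_2, orth2 U /\ orth2 V /\ F = U *m diag2 l1 l2 *m V.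

Definition Wext (W : 'M[R]_2 -> R) (F : 'M[R]_2) : \bar R :=
  if 0 < \det F then (W F)%:E else +oo%E.

Definition rank_one_convex (W : 'M[R]_2 -> R) : Prop :=
  forall F1 F2 : 'M[R]_2, \rank (F1 - F2) = 1%N ->
  forall t : R, 0 < t < 1 ->
    (Wext W (t *: F1 + (1 - t) *: F2) <= t%:E * Wext W F1 + (1 - t)%:E * Wext W F2)%E.

Definition isotropic (W : 'M[R]_2 -> R) : Prop :=
  forall F R1 R2 : 'M[R]_2, 0 < \det F -> rot2 R1 -> orth2 R2 ->
    0 < \det (R1 *m F *m R2) -> W (R1 *m F *m R2) = W F.

Definition convex_on_pos (g : R -> R) : Prop :=
  forall x y : R, 0 < x -> 0 < y -> forall t : R, 0 < t < 1 ->
    g (t * x + (1 - t) * y) <= t * g x + (1 - t) * g y.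
End Defs.

(* Rank-one convexity makes W convex along every rank-one line in GL+(2).
   The shear [[1, s], [0, 1]] has singular values p and 1/p for s = p - 1/p,
   so h is, up to the constant f 1, a convex function of s composed with a
   continuous change of variable, hence continuous; along diag(x, 1) the sum
   h + f is convex, so f is continuous too.  Along diag(sqrt c * x, sqrt c)
   the map x |-> h x + f (c x) is convex for every c > 0.  A continuous
   non-convex function has a point of strict midpoint concavity at all small
   radii (maximize its distance to a chord minus a small parabola).  If h and
   f had such points z_h and z_f, then with c = z_f / z_h and radii in the
   ratio z_h : z_f the two defects would add up and contradict the midpoint
   convexity of x |-> h x + f (c x) at z_h. *)

From HB Require Import structures.
From mathcomp Require Import all_boot all_order all_algebra.
From mathcomp Require Import reals constructive_ereal.
From mathcomp Require Import boolp classical_sets topology normedtype derive realfun.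
From mathcomp Require Import ring lra.
Import Order.TTheory GRing.Theory Num.Theory.
Import numFieldNormedType.Exports.
Set Implicit Arguments. Unset Strict Implicit. Unset Printing Implicit Defensive.
Local Open Scope ring_scope.

Section ConvexFunctions.
Variable R : realType.
Implicit Types (P : R -> Prop) (g h f k : R -> R) (a b c d l r x y z C : R).

(* [convex_on_pos g] is convertible to [convex_in (fun x => 0 < x) g]. *)
Definition convex_in P g := forall x y, P x -> P y -> forall t, 0 < t < 1 ->
  g (t * x + (1 - t) * y) <= t * g x + (1 - t) * g y.

Lemma eq_convex_on_pos g1 g2 : convex_on_pos g1 ->
  (forall x, 0 < x -> g1 x = g2 x) -> convex_on_pos g2.
Proof.
move=> cg1 e12 x y x0 y0 t /andP[t0 t1].
have : 0 < t * x + (1 - t) * y by rewrite addr_gt0 ?mulr_gt0 ?subr_gt0.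
by move=> /e12 <-; rewrite -!e12 //; apply: cg1 => //; rewrite t0.
Qed.

Lemma sub_convex_in P Q g : convex_in P g -> (forall x, Q x -> P x) -> convex_in Q g.
Proof. by move=> cg QP x y /QP Px /QP Py; apply: cg. Qed.

Lemma convex_in_midpoint P g z d : convex_in P g -> P (z - d) -> P (z + d) ->
  2 * g z <= g (z - d) + g (z + d).
Proof.
move=> cg Pm Pp; have := cg _ _ Pm Pp (1 / 2) ltac:(apply/andP; lra).
have -> : 1 / 2 * (z - d) + (1 - 1 / 2) * (z + d) = z by field.
lra.
Qed.

Lemma convex_in_dist_le P g x0 d l : convex_in P g ->
  P x0 -> P (x0 + d) -> P (x0 - d) -> P (x0 + l * d) -> 0 < l <= 1 ->
  `|g (x0 + l * d) - g x0| <= l * (`|g (x0 + d) - g x0| + `|g (x0 - d) - g x0|).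
Proof.
move=> cg P0 Pp Pm Pl /andP[l0 l1].
have up : g (x0 + l * d) - g x0 <= l * (g (x0 + d) - g x0).
  have [->|l_neq1] := eqVneq l 1; first by rewrite !mul1r.
  have := cg _ _ Pp P0 l ltac:(rewrite l0 lt_neqAle l_neq1 l1).
  have -> : l * (x0 + d) + (1 - l) * x0 = x0 + l * d by ring.
  lra.
have lo : g x0 - g (x0 + l * d) <= l * (g (x0 - d) - g x0).
  have u01 : 0 < (1 + l)^-1 < 1.
    by rewrite invr_gt0 invf_lt1 ?andbT; lra.
  have := cg _ _ Pl Pm _ u01.
  have -> : (1 + l)^-1 * (x0 + l * d) + (1 - (1 + l)^-1) * (x0 - d) = x0.
    by field; lra.
  have -> : (1 + l)^-1 * g (x0 + l * d) + (1 - (1 + l)^-1) * g (x0 - d) =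
            (g (x0 + l * d) + l * g (x0 - d)) / (1 + l) by field; lra.
  rewrite ler_pdivlMr; lra.
rewrite ler_norml; apply/andP.
have := ler_norm (g (x0 + d) - g x0); have := ler_norm (g (x0 - d) - g x0).
have := normr_ge0 (g (x0 + d) - g x0); have := normr_ge0 (g (x0 - d) - g x0).
split; nra.
Qed.

Lemma continuous_at_dist_le g x0 r C : 0 < r ->
  (forall s, `|s - x0| <= r -> `|g s - g x0| <= C * `|s - x0|) ->
  {for x0, continuous g}.
Proof.
move=> r0 bnd; apply/cvgrPdist_lt => e e0.
have C1 : 0 < `|C| + 1 by rewrite ltr_pwDr ?normr_ge0.
apply/nbhs_ballP; exists (Num.min r (e / (`|C| + 1))).
  by rewrite /= lt_min r0 divr_gt0.
move=> s; rewrite /ball /= lt_min distrC => /andP[/ltW sr].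
rewrite ltr_pdivlMr // => se.
rewrite distrC (le_lt_trans (bnd s sr)) // (le_lt_trans _ se) //.
have := ler_norm C; have := normr_ge0 (s - x0); nra.
Qed.

Lemma convex_in_continuous_at P g x0 r : 0 < r ->
  (forall z, x0 - r <= z <= x0 + r -> P z) -> convex_in P g ->
  {for x0, continuous g}.
Proof.
move=> r0 Pr cg.
set K := `|g (x0 + r) - g x0| + `|g (x0 - r) - g x0|.
apply: (@continuous_at_dist_le _ _ r (K / r)) => // s.
rewrite ler_norml => /andP[sl sr].
have P0 : P x0 by apply: Pr; lra.
have Pp : P (x0 + r) by apply: Pr; lra.
have Pm : P (x0 - r) by apply: Pr; lra.
have Ps : P s by apply: Pr; lra.
rewrite mulrC mulrA mulrAC.
have [sx|xs|->] := ltgtP s x0; last by rewrite !subrr normr0 !mul0r.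
- have l01 : 0 < (x0 - s) / r <= 1.
    by rewrite divr_gt0 ?ler_pdivrMr ?mul1r ?andTb; lra.
  have := @convex_in_dist_le P g x0 (- r) ((x0 - s) / r) cg P0 Pm.
  rewrite opprK mulrN mulfVK ?gt_eqF // subKr (addrC `|g (x0 - r) - _|).
  have -> : `|s - x0| = x0 - s by rewrite distrC ger0_norm // subr_ge0 ltW.
  by apply.
- have l01 : 0 < (s - x0) / r <= 1.
    by rewrite divr_gt0 ?ler_pdivrMr ?mul1r ?andTb; lra.
  have := @convex_in_dist_le P g x0 r ((s - x0) / r) cg P0 Pp Pm.
  rewrite mulfVK ?gt_eqF // addrC subrK.
  have -> : `|s - x0| = s - x0 by rewrite ger0_norm // subr_ge0 ltW.
  by apply.
Qed.

Lemma above_chord_local_concave k a b t : a < b -> 0 < t < 1 ->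
  (forall x, a <= x <= b -> {for x, continuous k}) ->
  t * k a + (1 - t) * k b < k (t * a + (1 - t) * b) ->
  exists z d0, [/\ 0 < d0, a <= z - d0 &
    forall d, 0 < d <= d0 -> k (z - d) + k (z + d) < 2 * k z].
Proof.
move=> ab /andP[t0 t1] ck gap_pos.
set m := t * a + (1 - t) * b.
set gap := k m - (t * k a + (1 - t) * k b).
set eta := gap / (2 * ((m - a) * (b - m))).
have eta0 : 0 < eta by rewrite divr_gt0 ?subr_gt0 // !mulr_gt0 ?subr_gt0 /m //; nra.
set q := fun z => k a + (k b - k a) / (b - a) * (z - a) + eta * ((z - a) * (b - z)).
set e := fun z => k z - q z.
have ce : {within `[a, b], continuous e}%classic.
  apply: continuous_in_subspaceT => x; rewrite inE /= in_itv /= => xab.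
  apply: cvgB; first exact: ck.
  apply: cvgD; [apply: cvgD; first exact: cvg_cst | apply: cvgM; first exact: cvg_cst].
  - by apply: cvgM; [exact: cvg_cst | apply: cvgB; [exact: cvg_id | exact: cvg_cst]].
  - by apply: cvgM; apply: cvgB; solve [exact: cvg_id | exact: cvg_cst].
have [z zab zmax] := EVT_max (ltW ab) ce.
have {}zmax x : a <= x <= b -> e x <= e z by move=> xab; apply: zmax; rewrite in_itv.
move: zab; rewrite in_itv /= => /andP[za zb].
have ba : b - a != 0 by rewrite subr_eq0 gt_eqF.
have ea : e a = 0 by rewrite /e /q; ring.
have eb : e b = 0 by rewrite /e /q; field.
have em : e m = gap / 2.
  rewrite /e /q /eta /gap /m; field.
  by rewrite ba andbT !subr_eq0 !neq_lt; apply/andP; split; apply/orP; right; nra.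
have ez : 0 < e z.
  apply: lt_le_trans (zmax m _); first by rewrite em /gap; lra.
  by rewrite /m; apply/andP; split; nra.
have az : a < z by rewrite lt_neqAle za andbT; apply: contraTneq ez => <-; rewrite ea ltxx.
have zb' : z < b by rewrite lt_neqAle zb andbT; apply: contraTneq ez => ->; rewrite eb ltxx.
exists z, (Num.min (z - a) (b - z)); split.
- by rewrite lt_min !subr_gt0 az zb'.
- by rewrite lerBrDl -lerBrDr ge_min lexx.
move=> d /andP[d0]; rewrite le_min => /andP[dza dbz].
have q2 : q (z - d) + q (z + d) = 2 * q z - 2 * (eta * d ^+ 2) by rewrite /q; ring.
have := zmax (z - d) ltac:(apply/andP; split; lra).
have := zmax (z + d) ltac:(apply/andP; split; lra).
have : 0 < eta * d ^+ 2 by rewrite mulr_gt0 ?exprn_gt0.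
rewrite /e; lra.
Qed.

Lemma not_convex_on_pos_local_concave k :
  (forall x, 0 < x -> {for x, continuous k}) -> ~ convex_on_pos k ->
  exists z d0, [/\ 0 < d0, 0 < z - d0 &
    forall d, 0 < d <= d0 -> k (z - d) + k (z + d) < 2 * k z].
Proof.
move=> ck nck.
have [x [y [t [x0 y0 t01 gap]]]] : exists x y t, [/\ 0 < x, 0 < y, 0 < t < 1 &
    t * k x + (1 - t) * k y < k (t * x + (1 - t) * y)].
  apply: contrapT => nex; apply: nck => x y x0 y0 t t01.
  by rewrite leNgt; apply/negP => gap; apply: nex; exists x, y, t.
have local a b s : 0 < a -> a < b -> 0 < s < 1 ->
    s * k a + (1 - s) * k b < k (s * a + (1 - s) * b) ->
    exists z d0, [/\ 0 < d0, 0 < z - d0 &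
      forall d, 0 < d <= d0 -> k (z - d) + k (z + d) < 2 * k z].
  move=> a0 ab s01 /(above_chord_local_concave ab s01) [].
    by move=> z /andP[az _]; apply: ck; lra.
  by move=> z [d0 [d00 azd Hz]]; exists z, d0; split => //; lra.
have [xy|yx|xy] := ltgtP x y.
- exact: local gap.
- apply: (local y x (1 - t)) => //; first lra.
  by rewrite opprB addrCA subrr addr0 (addrC ((1 - t) * y)) (addrC ((1 - t) * k y)).
- by move: gap; rewrite xy -!mulrDl subrKC !mul1r ltxx.
Qed.

Lemma convex_on_pos_dilated_sum h f :
  (forall x, 0 < x -> {for x, continuous h}) ->
  (forall x, 0 < x -> {for x, continuous f}) ->
  (forall c, 0 < c -> convex_on_pos (fun u => h u + f (c * u))) ->
  convex_on_pos h \/ convex_on_pos f.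
Proof.
move=> ch cf chf.
have [|nh] := pselect (convex_on_pos h); first by left.
have [|nf] := pselect (convex_on_pos f); first by right.
have [zh [dh [dh0 zdh Hh]]] := not_convex_on_pos_local_concave ch nh.
have [zf [df [df0 zdf Hf]]] := not_convex_on_pos_local_concave cf nf.
have zh0 : 0 < zh by lra.
have zf0 : 0 < zf by lra.
set r := Num.min (dh / zh) (df / zf).
have r0 : 0 < r by rewrite lt_min !divr_gt0.
have rh : r * zh <= dh by rewrite -ler_pdivlMr // ge_min lexx.
have rf : r * zf <= df by rewrite -ler_pdivlMr // ge_min lexx orbT.
have c0 : 0 < zf / zh by rewrite divr_gt0.
have zhE : zf / zh * zh = zf by rewrite mulfVK ?gt_eqF.
have rzh : 0 < r * zh by rewrite mulr_gt0.
have rzf : 0 < r * zf by rewrite mulr_gt0.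
have := @convex_in_midpoint (fun x => 0 < x) _ zh (r * zh) (chf _ c0).
rewrite !mulrDr !mulrN !zhE [_ / _ * (r * _)]mulrCA zhE => /(_ ltac:(lra) ltac:(lra)).
have := Hh (r * zh) ltac:(by rewrite rzh rh).
have := Hf (r * zf) ltac:(by rewrite rzf rf).
lra.
Qed.
End ConvexFunctions.

Section Matrix2.
Variable R : realType.
Implicit Types (A B : 'M[R]_2) (a b c s x y p : R).

Lemma matrix2P A B : A 0 0 = B 0 0 -> A 0 1 = B 0 1 -> A 1 0 = B 1 0 ->
  A 1 1 = B 1 1 -> A = B.
Proof.
move=> e00 e01 e10 e11; apply/matrixP => i j.
by case: i => -[|[|//]] ?; case: j => -[|[|//]] ?;
  [move: e00|move: e01|move: e10|move: e11]; congr (_ = _); congr (_ _ _); apply/val_inj.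
Qed.

Lemma det_mx2 A : \det A = A 0 0 * A 1 1 - A 0 1 * A 1 0.
Proof.
rewrite (expand_det_row _ 0) !big_ord_recl big_ord0 /cofactor !det_mx11 !mxE /=.
rewrite !expr0 !expr1 mul1r mulN1r addr0 mulrN.
by congr (_ * A _ _ - _ * A _ _); try congr (A _ _); exact: ord_inj.
Qed.

Definition rot c s : 'M[R]_2 :=
  \matrix_(i, j) if i == 0 then (if j == 0 then c else - s) else (if j == 0 then s else c).

Definition shear s : 'M[R]_2 := 1%:M + s *: delta_mx 0 1.

Lemma orth2_rot c s : c ^+ 2 + s ^+ 2 = 1 -> orth2 (rot c s).
Proof.
move=> cs; rewrite /orth2; apply: matrix2P; rewrite !mxE !big_ord_recl big_ord0 !mxE /=;
  by rewrite -cs; ring.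
Qed.

Lemma det_diag2 x y : \det (diag2 x y) = x * y.
Proof. by rewrite det_mx2 !mxE /= mulr0 subr0. Qed.

Lemma det_shear s : \det (shear s) = 1.
Proof. by rewrite det_mx2 !mxE /=; ring. Qed.

Lemma diag2_line a b x : diag2 (a * x) b = diag2 0 b + x *: (a *: delta_mx 0 0).
Proof. by apply: matrix2P; rewrite !mxE /=; ring. Qed.

Lemma singular_values_diag2 x y : 0 <= x -> 0 <= y -> singular_values (diag2 x y) x y.
Proof.
move=> x0 y0; do 2!split => //; exists 1%:M, 1%:M.
by rewrite /orth2 trmx1 mulmx1 mul1mx mulmx1.
Qed.

Lemma singular_values_shear p : 0 < p -> singular_values (shear (p - p^-1)) p p^-1.
Proof.
move=> p0; set n := Num.sqrt (1 + p ^+ 2).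
have n0 : 0 < n by rewrite sqrtr_gt0 ltr_pwDl ?sqr_ge0.
have nn : n ^+ 2 = 1 + p ^+ 2 by rewrite sqr_sqrtr // addr_ge0 ?sqr_ge0.
have [p_neq0 n_neq0] : p != 0 /\ n != 0 by rewrite !gt_eqF.
split; first exact: ltW.
split; first by rewrite invr_ge0 ltW.
exists (rot (p / n) n^-1), (rot n^-1 (- (p / n))); split; [|split].
- by apply: orth2_rot; field: nn.
- by apply: orth2_rot; field: nn.
- by apply: matrix2P; rewrite !(mxE, big_ord_recl, big_ord0) /=; field: nn;
    rewrite p_neq0 n_neq0.
Qed.
End Matrix2.

Section RankOneConvexity.
Variables (R : realType) (W : 'M[R]_2 -> R).
Hypothesis roc : rank_one_convex W.

Lemma rank_one_convex_line (M D : 'M[R]_2) : \rank D = 1%N ->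
  convex_in (fun s => 0 < \det (M + s *: D)) (fun s => W (M + s *: D)).
Proof.
move=> rD x y dx dy t t01.
have [<-|xy] := eqVneq x y; first by rewrite -!mulrDl subrKC !mul1r.
have rxy : \rank ((M + x *: D) - (M + y *: D)) = 1%N.
  by rewrite opprD addrACA subrr add0r -scalerBl mxrank_scale_nz // subr_eq0.
have := roc rxy t01.
have -> : t *: (M + x *: D) + (1 - t) *: (M + y *: D) = M + (t * x + (1 - t) * y) *: D.
  by rewrite !scalerDr !scalerA addrACA -scalerDl subrKC scale1r scalerDl.
rewrite /Wext dx dy -!EFinM -EFinD; case: ifP => _; first by rewrite lee_fin.
by rewrite leye_eq.
Qed.

Lemma convex_shear : convex_in (fun _ => True) (fun s => W (shear s)).
Proof.
apply: sub_convex_in (@rank_one_convex_line 1%:M (delta_mx 0 1) (mxrank_delta _ _ _)) _ => s _.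
by rewrite det_shear ltr01.
Qed.

Lemma convex_diag2 a b : 0 < a -> 0 < b -> convex_on_pos (fun u => W (diag2 (a * u) b)).
Proof.
move=> a0 b0; have rD : \rank (a *: delta_mx 0 0 : 'M[R]_2) = 1%N.
  by rewrite mxrank_scale_nz ?mxrank_delta ?gt_eqF.
rewrite (funext (fun u => congr1 W (diag2_line a b u))).
apply: sub_convex_in (@rank_one_convex_line (diag2 0 b) _ rD) _ => u u0.
by rewrite -diag2_line det_diag2 !mulr_gt0.
Qed.
End RankOneConvexity.

Section SplitEnergy.
Variables (R : realType) (W : 'M[R]_2 -> R) (h f : R -> R).
Implicit Types c u x y : R.
Hypothesis roc : rank_one_convex W.
Hypothesis W_split : forall (F : 'M[R]_2) (l1 l2 : R), 0 < \det F -> 0 < l1 -> 0 < l2 ->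
  singular_values F l1 l2 -> W F = h (l1 / l2) + f (l1 * l2).

Lemma W_diag2 x y : 0 < x -> 0 < y -> W (diag2 x y) = h (x / y) + f (x * y).
Proof.
move=> x0 y0; apply: W_split; rewrite ?det_diag2 ?mulr_gt0 //.
by apply: singular_values_diag2; apply: ltW.
Qed.

Lemma h_shear u : 0 < u -> h u = W (shear (Num.sqrt u - (Num.sqrt u)^-1)) - f 1.
Proof.
move=> u0; have su0 : 0 < Num.sqrt u by rewrite sqrtr_gt0.
rewrite (W_split (l1 := Num.sqrt u) (l2 := (Num.sqrt u)^-1)) ?det_shear ?invr_gt0 //;
  last exact: singular_values_shear.
by rewrite invrK -expr2 sqr_sqrtr ?ltW // mulfV ?gt_eqF // addrK.
Qed.

Lemma continuous_h u : 0 < u -> {for u, continuous h}.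
Proof.
move=> u0.
have cW : continuous (fun s => W (shear s)).
  by move=> s; apply: (convex_in_continuous_at ltr01 _ (convex_shear roc)).
set kh := fun v => W (shear (Num.sqrt v - (Num.sqrt v)^-1)) - f 1.
have kh_h : \forall v \near u, kh v = h v.
  by near=> v; rewrite /kh -h_shear //; near: v; apply: lt_nbhsr.
apply: cvg_trans (near_eq_cvg kh_h) _.
rewrite h_shear //; apply: cvgB; last exact: cvg_cst.
apply: (@continuous_comp _ _ _ (fun v => Num.sqrt v - (Num.sqrt v)^-1) (fun s => W (shear s)));
  last exact: cW.
apply: cvgB; first exact: sqrt_continuous.
by apply: continuousV; rewrite ?gt_eqF ?sqrtr_gt0 //; apply: sqrt_continuous.
Unshelve. all: by end_near. Qed.

Lemma continuous_f u : 0 < u -> {for u, continuous f}.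
Proof.
move=> u0; set g := fun v => W (diag2 (1 * v) 1).
have cg : {for u, continuous g}.
  apply: (convex_in_continuous_at (r := u / 2) _ _ (convex_diag2 roc ltr01 ltr01)).
  - by rewrite divr_gt0.
  - by move=> z /andP[zl _]; lra.
have g_hf : \forall v \near u, g v - h v = f v.
  near=> v; have v0 : 0 < v by near: v; apply: lt_nbhsr.
  by rewrite /g mul1r W_diag2 // divr1 mulr1; ring.
apply: cvg_trans (near_eq_cvg g_hf) _.
have -> : f u = g u - h u by rewrite /g mul1r W_diag2 // divr1 mulr1; ring.
exact: cvgB cg (continuous_h u0).
Unshelve. all: by end_near. Qed.

Lemma convex_dilated_split c : 0 < c -> convex_on_pos (fun u => h u + f (c * u)).
Proof.
move=> c0; set s := Num.sqrt c.
have s0 : 0 < s by rewrite sqrtr_gt0.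
apply: eq_convex_on_pos (convex_diag2 roc s0 s0) _ => u u0.
by rewrite W_diag2 ?mulr_gt0 // [s * u / s]mulrAC [s * u * s]mulrAC divff ?gt_eqF //
  mul1r -expr2 sqr_sqrtr ?ltW.
Qed.
End SplitEnergy.

Theorem lemma3p3 (R : realType) (W : 'M[R]_2 -> R) (h f : R -> R) :
  rank_one_convex W ->
  isotropic W ->
  (forall t : R, 0 < t -> h t = h t^-1) ->
  (forall (F : 'M[R]_2) (l1 l2 : R), 0 < \det F -> 0 < l1 -> 0 < l2 ->
     singular_values F l1 l2 -> W F = h (l1 / l2) + f (l1 * l2)) ->
  convex_on_pos h \/ convex_on_pos f.
Proof.
move=> roc _ _ W_split.
apply: convex_on_pos_dilated_sum.
- exact: continuous_h roc W_split.
- exact: continuous_f roc W_split.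
- exact: convex_dilated_split roc W_split.
Qed.
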